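(* If $G$ is an $\alpha_i$-metric graph ($i\ge 0$ an integer), then its interval thinness is at most $i+1$; that is, for all vertices $u,v$ and every integer $k$ with $0<k<d(u,v)$, any two vertices $x,y\in I(u,v)$ with $d(u,x)=d(u,y)=k$ satisfy $d(x,y)\le i+1$.
   Context: All graphs are finite, connected, unweighted, undirected, simple; $d(u,v)$ is the shortest-path distance. $I(u,v)=\{x: d(u,x)+d(x,v)=d(u,v)\}$. A graph is $\alpha_i$-metric if for all vertices $u,v,w,x$: whenever $v\in I(u,w)$, $w\in I(v,x)$ and $v,w$ are adjacent, then $d(u,x)\ge d(u,v)+d(v,x)-i$. *)

(* A finite simple graph is a symmetric irreflexive relation
   e : rel T on a finType T. *)
From mathcomp Require Import all_boot.
Set Implicit Arguments. Unset Strict Implicit. Unset Printing Implicit Defensive.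

Section Graph.
Variables (T : finType) (e : rel T).

Definition walkn (u v : T) (n : nat) : bool :=
  [exists p : n.-tuple T, path e u p && (last u p == v)].

(* shortest-path distance: least n such that a walk of length n from u to v
   exists (searched in 0..#|T|-1, which suffices in a connected graph). *)
Definition dist (u v : T) : nat := find (walkn u v) (iota 0 #|T|).

Definition graph_connected : Prop := forall u v : T, connect e u v.

Definition interval (u v x : T) : bool := dist u x + dist x v == dist u v.

Definition alpha_metric (i : nat) : Prop :=
  forall u v w x : T,
    interval u w v -> interval v x w -> e v w ->
    dist u v + dist v x - i <= dist u x.
End Graph.

(* Let [b'] be a neighbour of [b] one level further from [u] than [b], and let [a] be no
   further from [u] than [b'].  Then [d(a,b') <= i+1] implies [d(a,b) <= i+1]: either [b']
   lies on a geodesic from [a] to [b], and the α_i-condition for [a, b', b, u] gives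
   [d(a,b') + d(b',u) - i <= d(a,u) <= d(b',u)], i.e. [d(a,b') <= i]; or
   [d(a,b) <= d(a,b')].  Now take [x, y] in [I(u,v)] at the same level and neighbours
   [x', y'] one level closer to [v] inside [I(u,v)]; by induction on [d(x,v)],
   [d(x',y') <= i+1], and two applications of the observation move first [y'] to [y],
   then [x'] to [x]. *)
From mathcomp Require Import all_boot.
From mathcomp Require Import zify.

Set Implicit Arguments.
Unset Strict Implicit.
Unset Printing Implicit Defensive.

Section GraphDistance.
Variables (T : finType) (e : rel T).
Hypothesis e_sym : symmetric e.
Hypothesis e_irr : irreflexive e.
Hypothesis e_conn : graph_connected e.

Local Notation d := (dist e).

Lemma walknP u v n :
  reflect (exists p : seq T, [/\ size p = n, path e u p & last u p = v])
          (walkn e u v n).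
Proof.
apply: (iffP existsP) => [[p /andP [p_path /eqP p_last]] | [p [<- p_path p_last]]].
  by exists (val p); rewrite size_tuple.
by exists (in_tuple p); rewrite /= p_path p_last eqxx.
Qed.

Lemma walkn0 u : walkn e u u 0.
Proof. by apply/walknP; exists [::]. Qed.

Lemma walkn1 u v : e u v -> walkn e u v 1.
Proof. by move=> uv; apply/walknP; exists [:: v]; rewrite /= uv. Qed.

Lemma walkn_cat u v w m n :
  walkn e u v m -> walkn e v w n -> walkn e u w (m + n).
Proof.
move=> /walknP [p [<- p_path p_last]] /walknP [q [<- q_path q_last]].
apply/walknP; exists (p ++ q).
by rewrite size_cat cat_path p_path p_last q_path last_cat p_last.
Qed.

Lemma walkn_rev u v n : walkn e u v n -> walkn e v u n.
Proof.
move=> /walknP [p [<- p_path p_last]].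
apply/walknP; exists (rev (belast u p)); split.
- by rewrite size_rev size_belast.
- by rewrite -p_last rev_path (sub_path _ p_path) // => a b /=; rewrite e_sym.
- by case: p p_path p_last => [|a p] //= _ _; rewrite rev_cons last_rcons.
Qed.

(* A shortest walk is a path without repeated vertices, hence has fewer than [#|T|] edges. *)
Lemma has_walkn u v : has (walkn e u v) (iota 0 #|T|).
Proof.
have /connectP [p p_path p_last] := e_conn u v.
case: (shortenP p_path) p_last => q q_path q_uniq _ q_last.
apply/hasP; exists (size q); last by apply/walknP; exists q.
by rewrite mem_iota add0n; have := max_card (mem (u :: q)); rewrite (card_uniqP q_uniq).
Qed.

Lemma dist_lt_card u v : d u v < #|T|.
Proof. by rewrite -[X in _ < X](size_iota 0) -has_find has_walkn. Qed.

Lemma dist_walkn u v : walkn e u v (d u v).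
Proof. by have := nth_find 0 (has_walkn u v); rewrite nth_iota ?dist_lt_card. Qed.

Lemma dist_min u v n : walkn e u v n -> d u v <= n.
Proof.
move=> uv_n; have [n_lt|] := ltnP n #|T|; last exact: leq_trans (ltnW (dist_lt_card u v)).
rewrite leqNgt; apply/negP => /(before_find 0).
by rewrite nth_iota // uv_n.
Qed.

Lemma distC u v : d u v = d v u.
Proof. by apply/eqP; rewrite eqn_leq !dist_min // walkn_rev // dist_walkn. Qed.

Lemma dist_triangle u v w : d u w <= d u v + d v w.
Proof. by rewrite dist_min // (walkn_cat (dist_walkn u v) (dist_walkn v w)). Qed.

Lemma dist_xx u : d u u = 0.
Proof. by apply/eqP; rewrite -leqn0 dist_min // walkn0. Qed.

Lemma dist_eq0 u v : d u v = 0 -> u = v.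
Proof.
by move=> uv0; have /walknP := dist_walkn u v; rewrite uv0 => -[[|a p] [//= _ _ <-]].
Qed.

Lemma dist_edge u v : e u v -> d u v = 1.
Proof.
move=> uv; have : d u v <= 1 by rewrite dist_min // walkn1.
case: ltngtP => // /ltnSE; rewrite leqn0 => /eqP /dist_eq0 u_v.
by move: uv; rewrite u_v e_irr.
Qed.

Lemma dist_next x v n : d x v = n.+1 -> exists2 x', e x x' & d x' v = n.
Proof.
move=> xv; have /walknP := dist_walkn x v.
rewrite xv => -[[|a p] [//= [p_size] /andP [xa p_path] p_last]].
exists a => //; have : d a v <= n by rewrite -p_size dist_min //; apply/walknP; exists p.
by have := dist_triangle x a v; rewrite (dist_edge xa) xv; lia.
Qed.

Lemma interval_next u v x n : interval e u v x -> d x v = n.+1 ->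
  exists x', [/\ e x x', interval e u v x', d u x' = (d u x).+1 & d x' v = n].
Proof.
move=> /eqP x_in xv; have [x' xx' x'v] := dist_next xv.
have := dist_triangle u x x'; have := dist_triangle u x' v.
rewrite (dist_edge xx') => ux'v ux'.
by exists x'; split => //; rewrite ?/interval; [apply/eqP|]; lia.
Qed.

Section AlphaMetric.
Variable i : nat.
Hypothesis alpha : alpha_metric e i.

Lemma alpha_descend u a b b' : e b b' -> d u b' = (d u b).+1 -> d u a <= d u b' ->
  d a b' <= i.+1 -> d a b <= i.+1.
Proof.
move=> bb' ub' ua ab'; have b'b : d b' b = 1 by rewrite distC dist_edge.
have := dist_triangle a b' b; rewrite b'b.
case: (ltnP (d a b') (d a b)) => [ab_gt ab_le | ]; last by lia.
have ab'b : interval e a b b' by apply/eqP; lia.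
have b'ub : interval e b' u b by apply/eqP; rewrite b'b (distC b) (distC b') ub'.
have := alpha ab'b b'ub; rewrite e_sym bb' (distC b' u) (distC a u) ub'.
by move=> /(_ isT); lia.
Qed.

Lemma interval_level_dist u v x y :
  interval e u v x -> interval e u v y -> d u x = d u y -> d x y <= i.+1.
Proof.
move=> x_in y_in; move xv : (d x v) => n.
elim: n x y x_in y_in xv => [|n IHn] x y x_in y_in xv ux_uy.
  have yv : d y v = 0 by move: x_in y_in => /eqP + /eqP; lia.
  by rewrite (dist_eq0 xv) (dist_eq0 yv) dist_xx.
have yv : d y v = n.+1 by move: x_in y_in => /eqP + /eqP; lia.
have [x' [xx' x'_in ux' x'v]] := interval_next x_in xv.
have [y' [yy' y'_in uy' _]] := interval_next y_in yv.
have x'y' : d x' y' <= i.+1 by apply: IHn x'_in y'_in x'v _; rewrite ux' uy' ux_uy.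
have x'y : d x' y <= i.+1 by apply: (alpha_descend yy' uy'); rewrite // ux' uy' ux_uy.
by rewrite distC (alpha_descend xx' ux') // -?ux_uy ?ux' // distC.
Qed.

End AlphaMetric.
End GraphDistance.

Theorem lemma2 (T : finType) (e : rel T) (i : nat) :
  symmetric e -> irreflexive e -> graph_connected e ->
  alpha_metric e i ->
  forall (u v : T) (k : nat), 0 < k < dist e u v ->
  forall x y : T, interval e u v x -> interval e u v y ->
    dist e u x = k -> dist e u y = k ->
    dist e x y <= i.+1.
Proof.
move=> e_sym e_irr e_conn alpha u v k _ x y x_in y_in ux uy.
by apply: (interval_level_dist e_sym e_irr e_conn alpha x_in y_in); rewrite ux uy.
Qed.
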